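(* Let $S$ be a semiring and $\Sigma$ an alphabet. Then $\mathrm{Rev}(S,\Sigma)$ consists of precisely all finite sums of series from $\mathrm{Rev}_1(S,\Sigma)$; that is, a series $r \in S\langle\langle\Sigma^*\rangle\rangle$ belongs to $\mathrm{Rev}(S,\Sigma)$ if and only if $r = r_1 + \cdots + r_k$ for some $k \in \mathbb{N}$ (the empty sum being the zero series) and some $r_1,\ldots,r_k \in \mathrm{Rev}_1(S,\Sigma)$.
   Context: A semiring $(S,+,\cdot,0,1)$ has $(S,+,0)$ a commutative monoid, $(S,\cdot,1)$ a monoid, $\cdot$ distributing over $+$ on both sides and $0$ absorbing. A formal power series over $S$ and a finite nonempty alphabet $\Sigma$ is a map $r\colon \Sigma^*\to S$, written $(r,w)$ for its value at $w$; the set of these is $S\langle\langle\Sigma^*\rangle\rangle$, with pointwise addition. A weighted automaton over $S$ and $\Sigma$ is $\mathcal{A}=(Q,\sigma,\iota,\tau)$ with $Q$ a finite set, $\sigma\colon Q\times\Sigma\times Q\to S$, and $\iota,\tau\colon Q\to S$ (initial and final weights). A run on $w=a_1\cdots a_t$ is a sequence $q_0a_1q_1\cdots a_tq_t$ with $\sigma(q_{k-1},a_k,q_k)\neq 0$ for all $k$; its weight is $\iota(q_0)\sigma(q_0,a_1,q_1)\cdots\sigma(q_{t-1},a_t,q_t)\tau(q_t)$, and the series $\|\mathcal{A}\|$ realised by $\mathcal{A}$ has $(\|\mathcal{A}\|,w)$ equal to the sum of the weights of all runs on $w$. $\mathcal{A}$ is reversible if for all $p,p',q,q'\in Q$, $a\in\Sigma$: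 (i) if $\sigma(p,a,q)\neq0$ and $\sigma(p,a,q')\neq0$ then $q=q'$; (ii) if $\sigma(p,a,q)\neq0$ and $\sigma(p',a,q)\neq0$ then $p=p'$. $\mathrm{Rev}(S,\Sigma)$ denotes the set of series realised by reversible weighted automata over $S$ and $\Sigma$, and $\mathrm{Rev}_1(S,\Sigma)$ the set of series realised by reversible weighted automata over $S$ and $\Sigma$ having precisely one state $q$ with $\iota(q)\neq 0$. *)

From mathcomp Require Import all_boot all_algebra.
Set Implicit Arguments. Unset Strict Implicit. Unset Printing Implicit Defensive.
Import GRing.Theory.
Local Open Scope ring_scope.

(* Semiring S : pzSemiRingType (0 = 1 allowed, as in the paper's definition). *)

Definition series (S : pzSemiRingType) (Sigma : finType) := seq Sigma -> S.

Record wautomaton (S : pzSemiRingType) (Sigma : finType) := WAut {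
  wa_Q : finType;
  wa_sigma : wa_Q -> Sigma -> wa_Q -> S;
  wa_iota : wa_Q -> S;
  wa_tau : wa_Q -> S }.
Arguments wa_sigma {S Sigma} w _ _ _.
Arguments wa_iota {S Sigma} w _.
Arguments wa_tau {S Sigma} w _.

(* A run on w = a_1...a_t is given by its state sequence q_0 ... q_t
   (q_0 = head, rest = qs with size qs = size w) with all transitions nonzero. *)
Fixpoint is_run (S : pzSemiRingType) (Sigma : finType) (A : wautomaton S Sigma)
    (q : wa_Q A) (w : seq Sigma) (qs : seq (wa_Q A)) : bool :=
  match w, qs with
  | [::], [::] => true
  | a :: w', q' :: qs' => (wa_sigma A q a q' != 0) && is_run q' w' qs'
  | _, _ => false
  end.

Fixpoint trans_weight (S : pzSemiRingType) (Sigma : finType) (A : wautomaton S Sigma)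
    (q : wa_Q A) (w : seq Sigma) (qs : seq (wa_Q A)) : S :=
  match w, qs with
  | a :: w', q' :: qs' => wa_sigma A q a q' * trans_weight q' w' qs'
  | _, _ => 1
  end.

Definition run_weight (S : pzSemiRingType) (Sigma : finType) (A : wautomaton S Sigma)
    (q0 : wa_Q A) (w : seq Sigma) (qs : (size w).-tuple (wa_Q A)) : S :=
  wa_iota A q0 * trans_weight q0 w qs * wa_tau A (last q0 qs).

Definition behaviour (S : pzSemiRingType) (Sigma : finType) (A : wautomaton S Sigma)
    : series S Sigma := fun w =>
  \sum_(q0 : wa_Q A) \sum_(qs : (size w).-tuple (wa_Q A) | is_run q0 w qs)
     run_weight q0 qs.

Definition reversible (S : pzSemiRingType) (Sigma : finType) (A : wautomaton S Sigma) :=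
  (forall p q q' a, wa_sigma A p a q != 0 -> wa_sigma A p a q' != 0 -> q = q') /\
  (forall p p' q a, wa_sigma A p a q != 0 -> wa_sigma A p' a q != 0 -> p = p').

Definition Rev (S : pzSemiRingType) (Sigma : finType) (r : series S Sigma) : Prop :=
  exists A : wautomaton S Sigma, reversible A /\ behaviour A =1 r.

Definition Rev1 (S : pzSemiRingType) (Sigma : finType) (r : series S Sigma) : Prop :=
  exists A : wautomaton S Sigma, reversible A /\
    (exists q : wa_Q A, wa_iota A q != 0 /\ forall q', wa_iota A q' != 0 -> q' = q) /\
    behaviour A =1 r.

From mathcomp Require Import all_boot all_algebra.
Import GRing.Theory.
Local Open Scope ring_scope.

(* The behaviour of an automaton is the sum, over its initial states q, of
   iota(q) times the series computed from q. Keeping one initial state at a time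
   does not touch the transitions, so a reversible automaton splits into
   reversible automata with a single initial state; conversely the disjoint union
   of reversible automata is reversible and realises the sum of their series. *)

Section WeightedAutomata.
Variables (S : pzSemiRingType) (Sigma : finType).
Implicit Types (A B : wautomaton S Sigma) (w : seq Sigma).

Fixpoint behaviour_from {A} (q : wa_Q A) w : S :=
  match w with
  | [::] => wa_tau A q
  | a :: w' => \sum_(q' : wa_Q A) wa_sigma A q a q' * behaviour_from q' w'
  end.

Lemma sum_runs_from A w (q : wa_Q A) :
  \sum_(qs : (size w).-tuple (wa_Q A) | is_run q w qs)
     (trans_weight q w qs * wa_tau A (last q qs)) = behaviour_from q w.
Proof.
elim: w q => [|a w IHw] q /=.
  rewrite (big_pred1 [tuple]) /=; first by rewrite mul1r.
  by move=> t; rewrite [t]tuple0 /= eqxx.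
pose cons_tuple (p : wa_Q A * (size w).-tuple (wa_Q A)) := [tuple of p.1 :: p.2].
have cons_tuple_bij : {on [pred _ | true], bijective cons_tuple}.
  exists (fun t : (size w).+1.-tuple (wa_Q A) => (thead t, [tuple of behead t])).
    by move=> [x t] _; rewrite /= theadE; congr pair; apply: val_inj.
  by move=> t _; rewrite [in RHS](tuple_eta t).
pose run_term (qs : (size w).+1.-tuple (wa_Q A)) :=
  if is_run q (a :: w) qs then trans_weight q (a :: w) qs * wa_tau A (last q qs) else 0.
rewrite big_mkcond (reindex cons_tuple cons_tuple_bij).
rewrite -(pair_bigA _ (fun q' qs => run_term (cons_tuple (q', qs)))) /=.
apply: eq_bigr => q' _; rewrite -IHw big_distrr [RHS]big_mkcond /=.
apply: eq_bigr => qs _; rewrite /run_term /=.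
(* a run through a zero-weight transition contributes 0 either way *)
by case: eqVneq => [->|_] /=; case: ifP; rewrite ?mul0r ?mulrA.
Qed.

Lemma behaviourE A w :
  behaviour A w = \sum_(q : wa_Q A) wa_iota A q * behaviour_from q w.
Proof.
apply: eq_bigr => q _; rewrite -sum_runs_from big_distrr /=.
by apply: eq_bigr => qs _; rewrite /run_weight mulrA.
Qed.

Definition void_wautomaton : wautomaton S Sigma :=
  @WAut S Sigma void (fun _ _ _ => 0) (fun _ => 0) (fun _ => 0).

Lemma reversible_void : reversible void_wautomaton.
Proof. by split=> -[]. Qed.

Lemma behaviour_void w : behaviour void_wautomaton w = 0.
Proof. by rewrite behaviourE big1 // => -[]. Qed.

Definition sum_wautomaton A B : wautomaton S Sigma :=
  @WAut S Sigma (wa_Q A + wa_Q B)%type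
    (fun x a y => match x, y with
                  | inl p, inl q => wa_sigma A p a q
                  | inr p, inr q => wa_sigma B p a q
                  | _, _ => 0 end)
    (fun x => match x with inl p => wa_iota A p | inr p => wa_iota B p end)
    (fun x => match x with inl p => wa_tau A p | inr p => wa_tau B p end).

Lemma reversible_sum A B :
  reversible A -> reversible B -> reversible (sum_wautomaton A B).
Proof.
move=> [detA codetA] [detB codetB]; split.
- move=> [p|p] [q|q] [q'|q'] a //= nz nz'; rewrite ?eqxx // in nz nz' *.
  + by rewrite (detA _ _ _ _ nz nz').
  + by rewrite (detB _ _ _ _ nz nz').
- move=> [p|p] [p'|p'] [q|q] a //= nz nz'; rewrite ?eqxx // in nz nz' *.
  + by rewrite (codetA _ _ _ _ nz nz').
  + by rewrite (codetB _ _ _ _ nz nz').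
Qed.

Lemma behaviour_from_suml A B (q : wa_Q A) w :
  behaviour_from (A := sum_wautomaton A B) (inl q) w = behaviour_from q w.
Proof.
elim: w q => [|a w IHw] q //=.
rewrite big_sumType /= [X in _ + X]big1 ?addr0 => [|q' _]; last by rewrite mul0r.
by apply: eq_bigr => q' _; rewrite IHw.
Qed.

Lemma behaviour_from_sumr A B (q : wa_Q B) w :
  behaviour_from (A := sum_wautomaton A B) (inr q) w = behaviour_from q w.
Proof.
elim: w q => [|a w IHw] q //=.
rewrite big_sumType /= [X in X + _]big1 ?add0r => [|q' _]; last by rewrite mul0r.
by apply: eq_bigr => q' _; rewrite IHw.
Qed.

Lemma behaviour_sum A B w :
  behaviour (sum_wautomaton A B) w = behaviour A w + behaviour B w.
Proof.
rewrite !behaviourE big_sumType /=.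
by congr (_ + _); apply: eq_bigr => q _; rewrite ?behaviour_from_suml ?behaviour_from_sumr.
Qed.

Definition restrict_init {A} (q0 : wa_Q A) : wautomaton S Sigma :=
  @WAut S Sigma (wa_Q A) (wa_sigma A)
    (fun q => if q == q0 then wa_iota A q0 else 0) (wa_tau A).

Lemma behaviour_restrict_init A (q0 : wa_Q A) w :
  behaviour (restrict_init q0) w = wa_iota A q0 * behaviour_from q0 w.
Proof.
have from_eq (q : wa_Q A) w' :
    behaviour_from (A := restrict_init q0) q w' = behaviour_from q w'.
  by elim: w' q => [|a w' IHw] q //=; apply: eq_bigr => q' _; rewrite IHw.
rewrite behaviourE (bigD1 q0) //= eqxx from_eq big1 ?addr0 // => q /negPf ->.
by rewrite mul0r.
Qed.

Lemma Rev1_restrict_init A (q0 : wa_Q A) :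
  reversible A -> wa_iota A q0 != 0 -> Rev1 (behaviour (restrict_init q0)).
Proof.
move=> revA iota_q0; exists (restrict_init q0); split; first exact: revA.
split=> //; exists q0; split; first by rewrite /= eqxx.
by move=> q /=; case: (q =P q0) => // _; rewrite eqxx.
Qed.

Lemma behaviour_restrict_init_sum A w :
  behaviour A w =
  \sum_(q0 : wa_Q A | wa_iota A q0 != 0) behaviour (restrict_init q0) w.
Proof.
rewrite behaviourE (bigID [pred q | wa_iota A q != 0]) /=.
rewrite [X in _ + X]big1 ?addr0 => [|q /negPn/eqP ->]; last by rewrite mul0r.
by apply: eq_bigr => q _; rewrite behaviour_restrict_init.
Qed.

Lemma Rev_eq (r r' : series S Sigma) : Rev r -> r =1 r' -> Rev r'.
Proof. by move=> [A [revA behA]] eq_r; exists A; split=> // w; rewrite behA. Qed.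

Lemma Rev1_Rev (r : series S Sigma) : Rev1 r -> Rev r.
Proof. by move=> [A [revA [_ behA]]]; exists A. Qed.

Lemma Rev_big (I : Type) (s : seq I) (rs : I -> series S Sigma) :
  (forall i, Rev (rs i)) -> Rev (fun w => \sum_(i <- s) rs i w).
Proof.
move=> Rev_rs; elim: s => [|i s [A [revA behA]]].
  exists void_wautomaton; split; first exact: reversible_void.
  by move=> w; rewrite behaviour_void big_nil.
have [B [revB behB]] := Rev_rs i.
exists (sum_wautomaton B A); split; first exact: reversible_sum.
by move=> w; rewrite behaviour_sum behA behB big_cons.
Qed.

End WeightedAutomata.
Arguments restrict_init {S Sigma A}.

Theorem proposition1 (S : pzSemiRingType) (Sigma : finType) (HSigma : (0 < #|Sigma|)%N)
    (r : series S Sigma) :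
  Rev r <->
  exists (k : nat) (rs : 'I_k -> series S Sigma),
    (forall i, Rev1 (rs i)) /\ (forall w, r w = \sum_(i < k) rs i w).
Proof.
(* No construction below needs a letter. *)
split=> [[A [revA behA]] | [k [rs [Rev1_rs r_sum]]]].
- pose I := [pred q | wa_iota A q != 0].
  exists #|I|, (fun i => behaviour (restrict_init (enum_val (A := I) i))); split.
    by move=> i; apply: Rev1_restrict_init => //; exact: (enum_valP i).
  move=> w; rewrite -behA behaviour_restrict_init_sum.
  exact: (big_enum_val (A := I) (fun q => behaviour (restrict_init q) w)).
- apply: Rev_eq (fun w => esym (r_sum w)).
  by apply: Rev_big => i; apply: Rev1_Rev.
Qed.
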